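(* Let $p$ be prime, let $k\ge 2$ and $\ell\ge 1$ be integers, and let $\ell_{i_1}\le \ell_{i_2}\le\cdots\le\ell_{i_{k-1}}$ be positive integers. For $1\le m\le k-1$ let $y_{i_m}\in F_p[x]$ be given polynomials of degree less than $\ell_{i_m}$, pairwise distinct, and set $L_{i_m}=(\ell_{i_m}-1)(k-1)+\ell$. Let $s_0,s_1\in F_p[x]$ be two distinct polynomials of degree less than $\ell$, and let $z_{i_m}\in F_p[x]$ be given polynomials of degree less than $L_{i_m}$ ($1\le m\le k-1$). For $h\in\{0,1\}$ consider the system of congruences in the unknowns $(r_{h,0},\dots,r_{h,k-2})$, where each $r_{h,j}$ ranges over the polynomials in $F_p[x]$ of degree less than $L_{i_{k-1}}$: $$z_{i_m}\equiv \sum_{j=0}^{k-2} r_{h,j}\,y_{i_m}^{\,j}+s_h\,y_{i_m}^{\,k-1}\pmod{x^{L_{i_m}}},\qquad m=1,\dots,k-1.$$ Then the system for $h=0$ and the system for $h=1$ have the same number of solutions.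
   Context: $F_p[x]$ is the polynomial ring over the finite field $F_p$. Since $L_{i_1}\le\cdots\le L_{i_{k-1}}$, each congruence is well defined for unknowns taken modulo $x^{L_{i_{k-1}}}$. *)

From HB Require Import structures.
From mathcomp Require Import all_boot all_order all_algebra.
Set Implicit Arguments. Unset Strict Implicit. Unset Printing Implicit Defensive.
Import GRing.Theory.
Local Open Scope ring_scope.

(* L_{i_m} = (ell_{i_m} - 1)(k-1) + ell ; here m is 0-based (m < k-1). *)
Definition Lval (k l : nat) (ell_ : nat -> nat) (m : nat) : nat :=
  ((ell_ m).-1 * k.-1 + l)%N.

Definition poly_of_coefs (F : nzRingType) (n : nat) (c : {ffun 'I_n -> F}) : {poly F} :=
  \poly_(i < n) (if insub i is Some j then c j else 0).

(* The system of congruences for a given s (= s_h) and unknowns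
   r_j = poly_of_coefs (c j), j = 0..k-2, each of degree < Lmax:
     z_m = sum_j r_j y_m^j + s y_m^(k-1)   (mod x^(L_m)),  m = 0..k-2 *)
Definition solves (F : fieldType) (k : nat) (Lm : nat -> nat) (Lmax : nat)
  (y z : nat -> {poly F}) (s : {poly F}) (c : {ffun 'I_k.-1 -> {ffun 'I_Lmax -> F}}) : bool :=
  [forall m : 'I_k.-1,
     'X^(Lm m) %| (z m - (\sum_(j < k.-1) poly_of_coefs (c j) * (y m) ^+ j
                          + s * (y m) ^+ k.-1))].

(* The polynomial R(X) := X^(k-1) - prod_m (X - y_m) has degree < k-1 and
   agrees with X^(k-1) at every y_m, so sum_j R_j y_m^j = y_m^(k-1).  Hence
   adding (s0 - s1) R_j to the unknown r_j and replacing s0 by s1 leaves every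
   right-hand side unchanged; truncating the shifts mod x^Lmax only changes
   them by multiples of x^(L_m).  This translation of the unknowns is a
   bijection between the two solution sets. *)

From HB Require Import structures.
From mathcomp Require Import all_boot all_order all_algebra.
From mathcomp Require Import zify ring.
Set Implicit Arguments. Unset Strict Implicit. Unset Printing Implicit Defensive.
Import GRing.Theory.
Local Open Scope ring_scope.

Definition interp_Xn (R : idomainType) (ys : seq R) : {poly R} :=
  'X^(size ys) - \prod_(a <- ys) ('X - a%:P).

Lemma size_interp_Xn (R : idomainType) (ys : seq R) :
  (size (interp_Xn ys) <= size ys)%N.
Proof.
have size_prod : size (\prod_(a <- ys) ('X - a%:P)) = (size ys).+1.
  exact: size_prod_XsubC.
apply/leq_sizeP => i le_i; rewrite coefB coefXn.
case: (ltngtP i (size ys)) le_i => // [gt_i | ->] _.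
  by rewrite nth_default ?size_prod // subr0.
have := lead_coef_prod_XsubC ys xpredT id.
by rewrite /lead_coef size_prod /= => ->; rewrite subrr.
Qed.

Lemma interp_XnE (R : idomainType) (ys : seq R) a :
  a \in ys -> \sum_(j < size ys) (interp_Xn ys)`_j * a ^+ j = a ^+ size ys.
Proof.
move=> ys_a; rewrite -(horner_coef_wide _ (size_interp_Xn ys)).
rewrite hornerD hornerN hornerXn.
have /rootP -> : root (\prod_(b <- ys) ('X - b%:P)) a by rewrite root_prod_XsubC.
by rewrite subr0.
Qed.

Lemma poly_of_coefsD (F : nzRingType) n (a b : {ffun 'I_n -> F}) :
  poly_of_coefs (a + b) = poly_of_coefs a + poly_of_coefs b.
Proof.
apply/polyP => i; rewrite coefD !coef_poly; case: ifP => _; last by rewrite addr0.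
by case: insub => [j|]; rewrite ?ffunE ?addr0.
Qed.

Lemma poly_of_coefs_take (F : nzRingType) n (t : {poly F}) :
  poly_of_coefs [ffun i : 'I_n => t`_i] = t - drop_poly n t * 'X^n.
Proof.
rewrite -{2}(poly_take_drop n t) addrK.
apply/polyP => i; rewrite coef_poly coef_take_poly; case: ltnP => // lt_i_n.
by rewrite insubT /= ffunE.
Qed.

Section Translation.

Variables (F : finFieldType) (k Lmax : nat) (Lm : nat -> nat) (y z : nat -> {poly F}).
Hypothesis Lm_le_Lmax : forall m, (m < k.-1)%N -> (Lm m <= Lmax)%N.

Let ys := map y (iota 0 k.-1).
Let R := interp_Xn ys.

Let size_ys : size ys = k.-1.
Proof. by rewrite size_map size_iota. Qed.

Lemma sum_interp_Xn_at m : (m < k.-1)%N ->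
  \sum_(j < k.-1) R`_j * y m ^+ j = y m ^+ k.-1.
Proof.
move=> lt_m; rewrite -[in RHS]size_ys -(interp_XnE (a := y m)) ?size_ys //.
by rewrite map_f // mem_iota.
Qed.

Definition shift_coefs (d : {poly F}) : {ffun 'I_k.-1 -> {ffun 'I_Lmax -> F}} :=
  [ffun j : 'I_k.-1 => [ffun i : 'I_Lmax => (d * R`_j)`_i]].

Lemma solves_shift (d s : {poly F}) c :
  solves Lm y z (s - d) (c + shift_coefs d) = solves Lm y z s c.
Proof.
apply: eq_forallb => m; set Y := y m.
set err := \sum_(j < k.-1) drop_poly Lmax (d * R`_j) * 'X^Lmax * Y ^+ j.
have shifted_rhs :
    \sum_(j < k.-1) poly_of_coefs ((c + shift_coefs d) j) * Y ^+ j + (s - d) * Y ^+ k.-1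
    = \sum_(j < k.-1) poly_of_coefs (c j) * Y ^+ j + s * Y ^+ k.-1 - err.
  under eq_bigr do rewrite ffunE poly_of_coefsD ffunE poly_of_coefs_take.
  under eq_bigr do rewrite !mulrDl mulNr.
  have sum_dR : \sum_(j < k.-1) d * R`_j * Y ^+ j = d * Y ^+ k.-1.
    by under eq_bigr do rewrite -mulrA; rewrite -mulr_sumr sum_interp_Xn_at.
  by rewrite !big_split /= sumrN sum_dR /err; ring.
have Lm_dvd_err : 'X^(Lm m) %| err.
  apply: (big_ind (fun q => 'X^(Lm m) %| q)) => [|q r|j _].
  - exact: dvdp0.
  - exact: dvdp_add.
  by rewrite dvdp_mulr // dvdp_mull // dvdp_exp2l // Lm_le_Lmax.
by rewrite shifted_rhs opprB addrCA dvdp_addr.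
Qed.

Lemma card_solves_shift (s d : {poly F}) :
  #|[set c : {ffun 'I_k.-1 -> {ffun 'I_Lmax -> F}} | solves Lm y z s c]|
  = #|[set c : {ffun 'I_k.-1 -> {ffun 'I_Lmax -> F}} | solves Lm y z (s - d) c]|.
Proof.
rewrite -(card_imset _ (addIr (shift_coefs d))); apply: eq_card => c.
rewrite inE; apply/imsetP/idP => [[c' + ->] | sol_c].
  by rewrite inE (solves_shift d).
by exists (c - shift_coefs d); rewrite ?subrK // inE -(solves_shift d) subrK.
Qed.

End Translation.

Theorem theorem4 (p : nat) (k l : nat) (ell_ : nat -> nat)
  (y z : nat -> {poly 'F_p}) (s0 s1 : {poly 'F_p}) :
  prime p -> (2 <= k)%N -> (1 <= l)%N ->
  (forall m, (m < k.-1)%N -> (0 < ell_ m)%N) ->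
  (forall m1 m2, (m1 <= m2)%N -> (m2 < k.-1)%N -> (ell_ m1 <= ell_ m2)%N) ->
  (forall m, (m < k.-1)%N -> (size (y m) <= ell_ m)%N) ->
  (forall m1 m2, (m1 < k.-1)%N -> (m2 < k.-1)%N -> m1 <> m2 -> y m1 <> y m2) ->
  (size s0 <= l)%N -> (size s1 <= l)%N -> s0 <> s1 ->
  (forall m, (m < k.-1)%N -> (size (z m) <= Lval k l ell_ m)%N) ->
  #|[set c : {ffun 'I_k.-1 -> {ffun 'I_(Lval k l ell_ k.-2) -> 'F_p}}
      | solves (Lval k l ell_) y z s0 c]|
  = #|[set c : {ffun 'I_k.-1 -> {ffun 'I_(Lval k l ell_ k.-2) -> 'F_p}}
      | solves (Lval k l ell_) y z s1 c]|.
Proof.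
move=> _ k_ge2 _ _ ell_mono _ _ _ _ _ _.
have Lval_le_max m : (m < k.-1)%N -> (Lval k l ell_ m <= Lval k l ell_ k.-2)%N.
  move=> lt_m; have ell_le : (ell_ m <= ell_ k.-2)%N by apply: ell_mono; lia.
  by rewrite /Lval leq_add2r leq_mul2r; apply/orP; right; lia.
rewrite (card_solves_shift _ _ Lval_le_max s0 (s0 - s1)).
by rewrite opprB addrC subrK.
Qed.
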